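(* Let $\mathbb P\in\mathbb\Psi^m_H(M)$ with $\Re(m)<-d_H$, and write $\mathbb k=(\mathcal L_Z-m)\mathbb P$. For every integer $n\ge1$ and $h\ge0$, \[\mathrm{tr}_h(\mathbb P)=\sum_{j=0}^{n-1}\frac{h^j}{j!\,(j-m-d_H)}\mathrm{tr}_0^{(j)}(\mathbb k)+\frac{h^n}{(n-1)!}\int_0^1\mathrm{tr}^{(n)}_{hu}(\mathbb k)\,u^{n-m-d_H-1}\Big(\int_u^1t^{m+d_H-n}(1-t)^{n-1}dt\Big)du.\] In particular, if $P\in\Psi^m_H(M)$ and $\mathbb P_1=P$, \[\mathrm{tr}(P)=\sum_{j=0}^{n-1}\frac{1}{j!\,(j-m-d_H)}\mathrm{tr}_0^{(j)}(\mathbb k)+\frac{1}{(n-1)!}\int_0^1\mathrm{tr}^{(n)}_u(\mathbb k)\,u^{n-m-d_H-1}\,\mathrm B(1-u;n,m+d_H-n+1)\,du,\] where $\mathrm B(x;\alpha,\beta)=\int_0^xt^{\alpha-1}(1-t)^{\beta-1}dt$.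
   Context: $(M,H)$ Carnot manifold, homogeneous dimension $d_H$; $\mathbb T_HM$ its $H$-tangent groupoid over $M\times\mathbb R$; $\mathcal L_Z$ the generator of pushforward by the zoom action $\alpha_\lambda$ ($(x,y,h)\mapsto(x,y,\lambda^{-1}h)$, $((x,z),0)\mapsto((x,\delta_\lambda z),0)$). $\mathbb\Psi^m_H(M)$: $r$-fibred distributions $\mathbb P$ with $(\mathcal L_Z-m)\mathbb P\in C^\infty_p(\mathbb T_HM,\Omega_r)$ (smooth $r$-fibre densities, $r,s$-proper support); $\Psi^m_H(M)=\{\mathbb P_1\}$, $\mathbb P_1$ the restriction to $h=1$. Local trace $\mathrm{tr}_h$: restriction of a smooth $r$-fibre density to the unit space point $(x,x,h)$ (resp. $((x,0),0)$ at $h=0$), a density on $M$; $\mathrm{tr}^{(j)}_h(\mathbb f)=\frac{d^j}{dh^j}\mathrm{tr}_h(\mathbb f)$. For $\Re(m)<-d_H$, $\mathrm{tr}_h(\mathbb P)=\int_0^1\mathrm{tr}_{\lambda h}((\mathcal L_Z-m)\mathbb P)\lambda^{-m-d_H-1}d\lambda$, and $\mathrm{tr}(P):=\mathrm{tr}_1(\mathbb P)$. *)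

From Stdlib Require Import Reals Factorial.
From Coquelicot Require Import Coquelicot.
Open Scope R_scope.

(* F = (Fr, Fi) : h |-> tr_h(k), the local trace of the smooth r-fibre density
   k = (L_Z - m) P at the unit space point over a fixed x in M, written in a
   fixed trivialisation of the density line at x (real and imaginary parts).
   trk Fr Fi j h = tr_h^{(j)}(k) = d^j/dh^j tr_h(k). *)
Definition trk (Fr Fi : R -> R) (j : nat) (h : R) : C :=
  (Derive_n Fr j h, Derive_n Fi j h).

(* complex power t^z for real t > 0 : exp(z ln t) *)
Definition cpowR (t : R) (z : C) : C :=
  (exp (Re z * ln t) * cos (Im z * ln t), exp (Re z * ln t) * sin (Im z * ln t)).

Definition trP (m : C) (dH : nat) (Fr Fi : R -> R) (h : R) : C :=
  @RInt_gen C_R_CompleteNormedModule (fun l => Cmult (trk Fr Fi 0 (l * h)) (cpowR l (Copp m - RtoC (INR dH) - 1)%C))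
    (at_right 0) (at_point 1).

Definition incBeta (x : R) (a b : C) : C :=
  @RInt C_R_CompleteNormedModule (fun t => Cmult (cpowR t (a - 1)%C) (cpowR (1 - t) (b - 1)%C)) 0 x.

From Stdlib Require Import Reals Lra Lia Factorial.
From Coquelicot Require Import Coquelicot.
Open Scope R_scope.

(* Put [a = -m - d_H - 1], so that [Re a > -1], and [F(h) = tr_h(k)]; then
   [tr_h(P) = \int_0^1 F(h u) u^a du].  Integrating by parts [n] times against the kernels
   [K_0(u) = u^a], [K_{j+1}' = -K_j], [K_{j+1}(1) = 0] moves all derivatives onto [F]: the
   boundary terms at [u = 0] are [h^j F^(j)(0) K_{j+1}(0) = h^j F^(j)(0) / (j! (j+1+a))] and the
   remainder is [h^n \int_0^1 F^(n)(h u) K_n(u) du].  The kernel [K_n(u)] equals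
   [u^(n+a) / (n-1)! \int_u^1 t^(-n-a-1) (1-t)^(n-1) dt], an incomplete Beta function in [1-u]
   (both sides obey the same recursion in [n]).  The integrals over (0,1] are computed on [e,1]
   and [e -> 0]; this is legitimate since [K_{j+1}] is continuous at 0 precisely because
   [Re a > -1]. *)

Notation is_deriveC := (@is_derive R_AbsRing C_R_NormedModule).
Notation continuousC := (@continuous R_UniformSpace C_UniformSpace).
Notation RIntC := (@RInt C_R_CompleteNormedModule).
Notation is_RIntC := (@is_RInt C_R_NormedModule).
Notation RInt_genC := (@RInt_gen C_R_CompleteNormedModule).

(* [ring] and [field] only recognise the operations of [C] on an equation stated at type [C]. *)
Ltac Cring := match goal with |- ?A = ?B => change (@eq C A B) end; cbv beta; ring.
Ltac Cfield := match goal with |- ?A = ?B => change (@eq C A B) end; cbv beta; field.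

(** * Complex-valued calculus on the real line *)

Lemma C_ext (x y : C) : fst x = fst y -> snd x = snd y -> x = y.
Proof. intros; now apply injective_projections. Qed.

Lemma RtoC_neq0 (x : R) : x <> 0 -> RtoC x <> RtoC 0.
Proof. intros Hx E; now apply Hx, (f_equal fst E). Qed.

Lemma scal_C (r : R) (x : C) : @scal R_AbsRing C_R_NormedModule r x = Cmult (RtoC r) x.
Proof. destruct x; apply C_ext; simpl; unfold scal; simpl; unfold mult; simpl; ring. Qed.

Lemma is_deriveC_pair (f g : R -> R) x df dg : is_derive f x df -> is_derive g x dg ->
  is_deriveC (fun y => (f y, g y) : C) x ((df, dg) : C).
Proof.
intros Hf Hg; unfold is_derive in *.
apply (filterdiff_ext_lin _ (fun y : R => ((scal y df, scal y dg) : C))); [|easy].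
apply (filterdiff_comp'_2 f g (fun a b => (a, b)) x _ _ (fun a b => (a, b)) Hf Hg).
apply filterdiff_linear, is_linear_ext with (fun t => t); [now intros []|apply is_linear_id].
Qed.

Lemma is_deriveC_fst (f : R -> C) x l : is_deriveC f x l -> is_derive (fun y => fst (f y)) x (fst l).
Proof.
intros H; unfold is_derive in *.
apply (filterdiff_ext_lin _ (fun y : R => fst (@scal R_AbsRing C_R_NormedModule y l))); [|easy].
apply (filterdiff_comp' f (fun t : prod_NormedModule _ R_NormedModule R_NormedModule => fst t) x _ _ H).
now apply filterdiff_linear, is_linear_fst.
Qed.

Lemma is_deriveC_snd (f : R -> C) x l : is_deriveC f x l -> is_derive (fun y => snd (f y)) x (snd l).
Proof.
intros H; unfold is_derive in *.
apply (filterdiff_ext_lin _ (fun y : R => snd (@scal R_AbsRing C_R_NormedModule y l))); [|easy].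
apply (filterdiff_comp' f (fun t : prod_NormedModule _ R_NormedModule R_NormedModule => snd t) x _ _ H).
now apply filterdiff_linear, is_linear_snd.
Qed.

Lemma continuousC_pair (f g : R -> R) x : continuous f x -> continuous g x ->
  continuousC (fun y => (f y, g y) : C) x.
Proof.
intros Hf Hg; apply (continuous_comp_2 f g (fun a b => (a, b) : C) x Hf Hg).
apply continuous_ext with (fun t => t); [now intros []|apply continuous_id].
Qed.

Lemma continuousC_fst (f : R -> C) x : continuousC f x -> continuous (fun y => fst (f y)) x.
Proof.
intros H; apply (continuous_comp f (fun t : prod_UniformSpace R_UniformSpace R_UniformSpace => fst t)); [easy|].
now destruct (f x); apply continuous_fst.
Qed.

Lemma continuousC_snd (f : R -> C) x : continuousC f x -> continuous (fun y => snd (f y)) x.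
Proof.
intros H; apply (continuous_comp f (fun t : prod_UniformSpace R_UniformSpace R_UniformSpace => snd t)); [easy|].
now destruct (f x); apply continuous_snd.
Qed.

Lemma is_deriveC_ext_eq (f : R -> C) x l l' : is_deriveC f x l -> l = l' -> is_deriveC f x l'.
Proof. now intros H <-. Qed.

Lemma is_deriveC_continuous (f : R -> C) x l : is_deriveC f x l -> continuousC f x.
Proof. intros H; apply (ex_derive_continuous (V := C_R_NormedModule)); now exists l. Qed.

Lemma is_deriveC_const (c : C) x : is_deriveC (fun _ => c) x (RtoC 0).
Proof. exact (is_derive_const (V := C_R_NormedModule) c x). Qed.

Lemma is_deriveC_RtoC (f : R -> R) x l : is_derive f x l -> is_deriveC (fun y => RtoC (f y)) x (RtoC l).
Proof. intros; apply is_deriveC_pair; [easy|apply (is_derive_const (V := R_NormedModule))]. Qed.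

Lemma is_deriveC_minus (f g : R -> C) x a b : is_deriveC f x a -> is_deriveC g x b ->
  is_deriveC (fun y => Cminus (f y) (g y)) x (Cminus a b).
Proof. exact (is_derive_minus (V := C_R_NormedModule) f g x a b). Qed.

Lemma is_deriveC_mult (f g : R -> C) x a b : is_deriveC f x a -> is_deriveC g x b ->
  is_deriveC (fun y => Cmult (f y) (g y)) x (Cplus (Cmult a (g x)) (Cmult (f x) b)).
Proof.
intros Hf Hg.
assert (Hmul : forall u v (du dv : R), is_derive u x du -> is_derive v x dv ->
    is_derive (fun y => u y * v y) x (du * v x + u x * dv))
  by (intros u v du dv Hu Hv; apply (is_derive_mult u v); auto; intros; apply Rmult_comm).
eapply is_derive_ext; [intros t; symmetry; apply surjective_pairing|].
apply (is_deriveC_ext_eq _ _ ((fst a * fst (g x) + fst (f x) * fst b - (snd a * snd (g x) + snd (f x) * snd b),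
   fst a * snd (g x) + fst (f x) * snd b + (snd a * fst (g x) + snd (f x) * fst b)) : C)).
- apply is_deriveC_pair; simpl.
  + apply (is_derive_minus (V := R_NormedModule)); apply Hmul;
      first [apply is_deriveC_fst|apply is_deriveC_snd]; easy.
  + apply (is_derive_plus (V := R_NormedModule)); apply Hmul;
      first [apply is_deriveC_fst|apply is_deriveC_snd]; easy.
- destruct a, b, (f x), (g x); apply C_ext; simpl; ring.
Qed.

Lemma is_deriveC_scal_l (c : C) (f : R -> C) x l : is_deriveC f x l ->
  is_deriveC (fun y => Cmult c (f y)) x (Cmult c l).
Proof.
intros H; eapply is_deriveC_ext_eq; [apply is_deriveC_mult; [apply is_deriveC_const|exact H]|Cring].
Qed.

Lemma is_deriveC_id_mult (f : R -> C) x l : is_deriveC f x l ->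
  is_deriveC (fun y => Cmult (RtoC y) (f y)) x (Cplus (f x) (Cmult (RtoC x) l)).
Proof.
intros H; eapply is_deriveC_ext_eq.
- apply is_deriveC_mult; [apply is_deriveC_RtoC, (is_derive_id (K := R_AbsRing))|exact H].
- change (one : R) with 1; Cring.
Qed.

Lemma continuousC_const (c : C) x : continuousC (fun _ => c) x.
Proof. apply continuous_const. Qed.

Lemma continuousC_RtoC (f : R -> R) x : continuous f x -> continuousC (fun y => RtoC (f y)) x.
Proof. intros; apply continuousC_pair; [easy|apply continuous_const]. Qed.

Lemma continuousC_plus (f g : R -> C) x : continuousC f x -> continuousC g x ->
  continuousC (fun y => Cplus (f y) (g y)) x.
Proof. exact (continuous_plus (V := C_R_NormedModule) f g x). Qed.

Lemma continuousC_minus (f g : R -> C) x : continuousC f x -> continuousC g x ->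
  continuousC (fun y => Cminus (f y) (g y)) x.
Proof. exact (continuous_minus (V := C_R_NormedModule) f g x). Qed.

Lemma continuousC_mult (f g : R -> C) x : continuousC f x -> continuousC g x ->
  continuousC (fun y => Cmult (f y) (g y)) x.
Proof.
intros Hf Hg; eapply continuous_ext; [intros t; symmetry; apply surjective_pairing|].
apply continuousC_pair; simpl.
- apply (continuous_minus (V := R_NormedModule)); apply (continuous_mult (K := R_AbsRing));
    first [apply continuousC_fst|apply continuousC_snd]; easy.
- apply (continuous_plus (V := R_NormedModule)); apply (continuous_mult (K := R_AbsRing));
    first [apply continuousC_fst|apply continuousC_snd]; easy.
Qed.

Lemma continuous_of_ex_derive (f : R -> R) x : (forall y, ex_derive f y) -> continuous f x.
Proof. intros; now apply (ex_derive_continuous (K := R_AbsRing) (V := R_NormedModule)). Qed.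

Lemma is_RIntC_scal_l (c : C) (f : R -> C) a b l : is_RIntC f a b l ->
  is_RIntC (fun t => Cmult c (f t)) a b (Cmult c l).
Proof.
intros H; destruct c as [c1 c2].
pose proof (is_RInt_fct_extend_fst (U := R_NormedModule) (V := R_NormedModule) _ _ _ _ H) as H1.
pose proof (is_RInt_fct_extend_snd (U := R_NormedModule) (V := R_NormedModule) _ _ _ _ H) as H2.
apply (is_RInt_fct_extend_pair (U := R_NormedModule) (V := R_NormedModule)); simpl.
- apply (is_RInt_minus (V := R_NormedModule) (fun t => c1 * fst (f t)) (fun t => c2 * snd (f t)));
    now apply (is_RInt_scal (V := R_NormedModule)).
- apply (is_RInt_plus (V := R_NormedModule) (fun t => c1 * snd (f t)) (fun t => c2 * fst (f t)));
    now apply (is_RInt_scal (V := R_NormedModule)).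
Qed.

Lemma RIntC_derive (phi f : R -> C) a b : a <= b ->
  (forall x, a <= x <= b -> is_deriveC phi x (f x)) ->
  (forall x, a <= x <= b -> continuousC f x) ->
  RIntC f a b = Cminus (phi b) (phi a).
Proof.
intros Hab Hd Hc; apply (is_RInt_unique (V := C_R_CompleteNormedModule)).
apply (is_RInt_derive (V := C_R_CompleteNormedModule));
  intros x Hx; rewrite Rmin_left, Rmax_right in Hx by easy; auto.
Qed.

Lemma RIntC_lincomb (f g : R -> C) (c d : C) a b :
  @ex_RInt C_R_NormedModule f a b -> @ex_RInt C_R_NormedModule g a b ->
  RIntC (fun t => Cminus (Cmult c (f t)) (Cmult d (g t))) a b =
  Cminus (Cmult c (RIntC f a b)) (Cmult d (RIntC g a b)).
Proof.
intros Hf Hg; apply (is_RInt_unique (V := C_R_CompleteNormedModule)).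
apply (is_RInt_minus (V := C_R_NormedModule)); apply is_RIntC_scal_l;
  now apply (RInt_correct (V := C_R_CompleteNormedModule)).
Qed.

Lemma ex_RIntC_continuous (f : R -> C) a b : a <= b ->
  (forall x, a <= x <= b -> continuousC f x) -> @ex_RInt C_R_NormedModule f a b.
Proof.
intros Hab Hc; apply (ex_RInt_continuous (V := C_R_CompleteNormedModule)).
intros x Hx; rewrite Rmin_left, Rmax_right in Hx by easy; auto.
Qed.

Lemma is_RIntC_reflect (g : R -> C) c l : is_RIntC g 0 c l -> is_RIntC (fun t => g (1 - t)) (1 - c) 1 l.
Proof.
intros Hg; apply (is_RInt_swap (V := C_R_NormedModule)) in Hg.
replace c with (-1 * (1 - c) + 1) in Hg by ring; replace 0 with (-1 * 1 + 1) in Hg by ring.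
apply (is_RInt_comp_lin (V := C_R_NormedModule)), (is_RInt_opp (V := C_R_NormedModule)) in Hg.
rewrite opp_opp in Hg; refine (is_RInt_ext _ _ _ _ _ _ Hg); intros t _.
rewrite scal_C, (Rplus_comm _ 1); change (@opp C_R_NormedModule) with Copp.
replace (1 + -1 * t) with (1 - t) by ring.
replace (RtoC (-1)) with (Copp (RtoC 1)) by (apply C_ext; simpl; ring); Cring.
Qed.

Lemma RInt_gen_at_right_continuous (f Phi : R -> C) :
  (forall e, 0 < e < 1 -> is_RIntC f e 1 (Phi e)) -> continuousC Phi 0 ->
  RInt_genC f (at_right 0) (at_point 1) = Phi 0.
Proof.
intros Hf Hc; apply (is_RInt_gen_unique (V := C_R_CompleteNormedModule)).
intros P HP.
assert (Hlt1 : locally 0 (fun e : R => e < 1)).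
{ exists (mkposreal 1 Rlt_0_1); intros y Hy; unfold ball in Hy; simpl in Hy.
  unfold AbsRing_ball, abs, minus, plus, opp in Hy; simpl in Hy; apply Rabs_lt_between in Hy; lra. }
apply Filter_prod with (fun e => 0 < e < 1 /\ P (Phi e)) (fun b => b = 1); [|easy|].
- assert (HPhi : locally 0 (fun e => P (Phi e))) by now apply Hc.
  unfold at_right, within; generalize (filter_and _ _ HPhi Hlt1); apply filter_imp.
  intros x [HPx Hx] Hpos; repeat split; easy.
- intros x y [Hx HPx] ->; exists (Phi x); split; auto.
Qed.

Lemma sum_Sn_C (f : nat -> C) k : sum_n f (S k) = Cplus (sum_n f k) (f (S k)).
Proof. now rewrite sum_Sn. Qed.

Lemma continuousC_sum_n (F : nat -> R -> C) k x : (forall j, continuousC (F j) x) ->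
  continuousC (fun e => sum_n (fun j => F j e) k) x.
Proof.
intros H; induction k as [|k IHk].
- apply continuous_ext with (F 0%nat); [intros; now rewrite sum_O|apply H].
- apply continuous_ext with (fun e => Cplus (sum_n (fun j => F j e) k) (F (S k) e));
    [intros; symmetry; apply sum_Sn_C|now apply continuousC_plus].
Qed.

Lemma Cmult_solve_l (w x y : C) : w <> RtoC 0 -> Cmult w x = y -> x = Cmult (Cinv w) y.
Proof. intros Hw <-; Cfield; exact Hw. Qed.

(** * Complex powers *)

Lemma cpowR_plus t z1 z2 : Cmult (cpowR t z1) (cpowR t z2) = cpowR t (Cplus z1 z2).
Proof.
destruct z1 as [a b], z2 as [c d]; unfold cpowR, Cmult, Cplus; simpl; apply C_ext; simpl;
  rewrite !Rmult_plus_distr_r, exp_plus; [rewrite cos_plus|rewrite sin_plus]; ring.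
Qed.

Lemma cpowR_O t : cpowR t (RtoC 0) = RtoC 1.
Proof. unfold cpowR; simpl; rewrite !Rmult_0_l, exp_0, cos_0, sin_0; apply C_ext; simpl; ring. Qed.

Lemma cpowR_1 t : 0 < t -> cpowR t (RtoC 1) = RtoC t.
Proof.
intros Ht; unfold cpowR; simpl; rewrite Rmult_0_l, Rmult_1_l, exp_ln, cos_0, sin_0 by easy.
apply C_ext; simpl; ring.
Qed.

Lemma cpowR_1_l z : cpowR 1 z = RtoC 1.
Proof. unfold cpowR; rewrite ln_1, !Rmult_0_r, exp_0, cos_0, sin_0; apply C_ext; simpl; ring. Qed.

Lemma cpowR_pow t k : 0 < t -> cpowR t (RtoC (INR k)) = RtoC (t ^ k).
Proof.
intros Ht; unfold cpowR; simpl; rewrite Rmult_0_l, cos_0, sin_0, <- Rpower_pow by easy.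
unfold Rpower; apply C_ext; simpl; ring.
Qed.

Lemma cpowR_pred t z : 0 < t -> Cmult (RtoC (/ t)) (cpowR t z) = cpowR t (Cminus z (RtoC 1)).
Proof.
intros Ht.
assert (Hinv : cpowR t (Copp (RtoC 1)) = RtoC (/ t)).
{ unfold cpowR; simpl; rewrite Ropp_0, Rmult_0_l, cos_0, sin_0.
  replace (- (1) * ln t) with (- ln t) by ring; rewrite exp_Ropp, exp_ln by easy.
  apply C_ext; simpl; ring. }
rewrite <- Hinv, cpowR_plus; f_equal; Cring.
Qed.

Lemma is_derive_cpowR t z : 0 < t ->
  is_deriveC (fun s => cpowR s z) t (Cmult z (Cmult (RtoC (/ t)) (cpowR t z))).
Proof.
intros Ht; destruct z as [a b]; unfold cpowR, Cmult; simpl.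
apply is_deriveC_pair; auto_derive; auto; simpl; field; lra.
Qed.

Lemma continuous_cpowR t z : 0 < t -> continuousC (fun s => cpowR s z) t.
Proof. intros Ht; eapply is_deriveC_continuous, is_derive_cpowR, Ht. Qed.

Lemma locally_pos x : 0 < x -> locally x (fun y => 0 < y).
Proof.
intros Hx; exists (mkposreal x Hx); intros y Hy; unfold ball in Hy; simpl in Hy;
  unfold AbsRing_ball, abs, minus, plus, opp in Hy; simpl in Hy; apply Rabs_lt_between in Hy; lra.
Qed.

Lemma locally_neg x : x < 0 -> locally x (fun y => y < 0).
Proof.
intros Hx; assert (H : 0 < - x) by lra.
exists (mkposreal _ H); intros y Hy; unfold ball in Hy; simpl in Hy;
  unfold AbsRing_ball, abs, minus, plus, opp in Hy; simpl in Hy; apply Rabs_lt_between in Hy; lra.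
Qed.

(* The zero extension of [t |-> t ^ z] from (0, +oo) to R; it is continuous at 0 when
   [Re z > 0], which keeps the integration-by-parts kernels below continuous on [0, 1]. *)
Definition cpowR0 (t : R) (z : C) : C := if Rle_dec t 0 then RtoC 0 else cpowR t z.

Lemma cpowR0_pos t z : 0 < t -> cpowR0 t z = cpowR t z.
Proof. intros Ht; unfold cpowR0; destruct (Rle_dec t 0); [lra|easy]. Qed.

Lemma cpowR0_nonpos t z : t <= 0 -> cpowR0 t z = RtoC 0.
Proof. intros Ht; unfold cpowR0; destruct (Rle_dec t 0); [easy|lra]. Qed.

Lemma cpowR0_succ t z : Cmult (RtoC t) (cpowR0 t z) = cpowR0 t (Cplus z (RtoC 1)).
Proof.
destruct (Rle_dec t 0) as [Ht|Ht].
- rewrite !cpowR0_nonpos by easy; apply C_ext; simpl; ring.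
- rewrite !cpowR0_pos, <- (cpowR_1 t) at 1 by lra; rewrite cpowR_plus; f_equal; Cring.
Qed.

Lemma continuous_cpowR0 z x : 0 < Re z -> continuousC (fun t => cpowR0 t z) x.
Proof.
intros Hz; destruct (Rlt_le_dec 0 x) as [Hx|Hx].
{ apply continuous_ext_loc with (fun t => cpowR t z); [|now apply continuous_cpowR].
  apply (filter_imp _ _ (fun y Hy => eq_sym (cpowR0_pos y z Hy)) (locally_pos x Hx)). }
destruct (Rle_lt_or_eq_dec _ _ Hx) as [Hx' | ->].
{ apply continuous_ext_loc with (fun _ => RtoC 0); [|apply continuousC_const].
  apply (filter_imp _ _ (fun y Hy => eq_sym (cpowR0_nonpos y z (Rlt_le _ _ Hy))) (locally_neg x Hx')). }
unfold continuous; rewrite cpowR0_nonpos by lra; apply filterlim_locally; intros eps.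
(* [|t ^ z| = exp (Re z * ln t) < eps] as soon as [0 < t < exp (ln eps / Re z)]. *)
assert (Hd : 0 < exp (ln eps / Re z)) by apply exp_pos.
exists (mkposreal _ Hd); intros y Hy; unfold ball in Hy; simpl in Hy;
  unfold AbsRing_ball, abs, minus, plus, opp in Hy; simpl in Hy; apply Rabs_lt_between in Hy.
unfold cpowR0; destruct (Rle_dec y 0); [apply ball_center|].
assert (Hsmall : exp (Re z * ln y) < eps).
{ rewrite <- (exp_ln eps) by apply cond_pos; apply exp_increasing.
  assert (Hln : ln y < ln eps / Re z) by (rewrite <- (ln_exp (ln eps / Re z)); apply ln_increasing; lra).
  apply (Rmult_lt_compat_l (Re z)) in Hln; [|easy].
  replace (Re z * (ln eps / Re z)) with (ln eps) in Hln by (field; lra); lra. }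
assert (Hball : forall r : R, Rabs r <= exp (Re z * ln y) -> @ball R_UniformSpace 0 eps r).
{ intros r Hr; unfold ball; simpl; unfold AbsRing_ball, abs, minus, plus, opp; simpl.
  rewrite ?Ropp_0, Rplus_0_r; lra. }
unfold cpowR; split; apply Hball; simpl;
  rewrite Rabs_mult, (Rabs_pos_eq (exp _)) by (left; apply exp_pos);
  rewrite <- (Rmult_1_r (exp _)) at 2; apply Rmult_le_compat_l; try (left; apply exp_pos);
  apply Rabs_le; [generalize (COS_bound (Im z * ln y))|generalize (SIN_bound (Im z * ln y))]; lra.
Qed.

(** * The integration-by-parts kernels *)

Lemma is_derive_Taylor_weight k u :
  is_derive (fun v => (1 - v) ^ k / INR (fact k)) u (- INR k * (1 - u) ^ pred k / INR (fact k)).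
Proof.
unfold Rdiv; apply (is_derive_ext (fun v => / INR (fact k) * (1 - v) ^ k)); [intros; apply Rmult_comm|].
replace (- INR k * (1 - u) ^ pred k * / INR (fact k)) with (/ INR (fact k) * (INR k * (-1) * (1 - u) ^ pred k)) by ring.
apply (is_derive_scal (fun v => (1 - v) ^ k)), (is_derive_pow (fun v => 1 - v)).
auto_derive; [easy|ring].
Qed.

(* [kernel a n u = \int_u^1 (s - u)^(n-1) / (n-1)! s^a ds] for [n >= 1]: the n-fold primitive of
   [s^a] vanishing at 1, here given by the recursion obtained by integrating by parts. *)
Fixpoint kernel (a : C) (n : nat) (u : R) : C :=
  match n with
  | O => cpowR0 u a
  | S k => Cmult (Cinv (Cplus (RtoC (INR (S k))) a))
             (Cminus (RtoC ((1 - u) ^ k / INR (fact k))) (Cmult (RtoC u) (kernel a k u)))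
  end.

Lemma kernel_S_eq a k u : kernel a (S k) u = Cmult (Cinv (Cplus (RtoC (INR (S k))) a))
  (Cminus (RtoC ((1 - u) ^ k / INR (fact k))) (Cmult (RtoC u) (kernel a k u))).
Proof. reflexivity. Qed.

(* [beta_tail a n u = \int_u^1 t^(-n-a-1) (1-t)^(n-1) dt], so that with [a = -m-d_H-1] and the
   substitution [t |-> 1 - t] it becomes the incomplete Beta function [B(1-u; n, m+d_H-n+1)]. *)
Definition beta_exponent (a : C) (n : nat) : C := Copp (Cplus (RtoC (INR n)) (Cplus a (RtoC 1))).

Definition beta_weight (a : C) (n : nat) (t : R) : C :=
  Cmult (cpowR t (beta_exponent a n)) (RtoC ((1 - t) ^ (n - 1))).

Definition beta_tail (a : C) (n : nat) (u : R) : C := RIntC (beta_weight a n) u 1.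

Lemma beta_exponent_eq a n : beta_exponent a n = Copp (Cplus (RtoC (INR (S n))) a).
Proof. unfold beta_exponent; rewrite S_INR; apply C_ext; simpl; ring. Qed.

Lemma cpowR_beta_exponent a u n :
  Cmult (cpowR u (Cplus (RtoC (INR (S n))) a)) (cpowR u (beta_exponent a n)) = RtoC 1.
Proof. rewrite cpowR_plus, beta_exponent_eq, <- (cpowR_O u); f_equal; Cring. Qed.

Lemma continuous_beta_weight a n t : 0 < t -> continuousC (beta_weight a n) t.
Proof.
intros Ht; apply continuousC_mult; [now apply continuous_cpowR|].
apply continuousC_RtoC, continuous_of_ex_derive; intros; auto_derive; auto.
Qed.

Lemma ex_RInt_beta_weight a n u : 0 < u <= 1 -> @ex_RInt C_R_NormedModule (beta_weight a n) u 1.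
Proof. intros Hu; apply ex_RIntC_continuous; [lra|intros; apply continuous_beta_weight; lra]. Qed.

Lemma beta_tail_rec a n u : 0 < u <= 1 ->
  Cminus (Cmult (beta_exponent a n) (beta_tail a (S n) u)) (Cmult (RtoC (INR n)) (beta_tail a n u)) =
  Cminus (RtoC (0 ^ n)) (Cmult (cpowR u (beta_exponent a n)) (RtoC ((1 - u) ^ n))).
Proof.
intros Hu; unfold beta_tail; rewrite <- RIntC_lincomb by apply ex_RInt_beta_weight, Hu.
rewrite (RIntC_derive (fun t => Cmult (cpowR t (beta_exponent a n)) (RtoC ((1 - t) ^ n)))); [..|lra| |].
- rewrite cpowR_1_l, Rminus_diag; Cring.
- intros x Hx; eapply is_deriveC_ext_eq.
  + apply is_deriveC_mult; [apply is_derive_cpowR; lra|].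
    apply is_deriveC_RtoC, (is_derive_pow (fun t => 1 - t) n x (-1)); auto_derive; [easy|ring].
  + unfold beta_weight; rewrite cpowR_pred by lra.
    replace (Cminus (beta_exponent a n) (RtoC 1)) with (beta_exponent a (S n))
      by (unfold beta_exponent; rewrite S_INR; apply C_ext; simpl; ring).
    replace (S n - 1)%nat with n by lia; replace (n - 1)%nat with (pred n) by lia.
    replace (INR n * -1 * (1 - x) ^ pred n) with (- (INR n * (1 - x) ^ pred n)) by ring.
    rewrite RtoC_opp, RtoC_mult; Cring.
- intros x Hx; apply continuousC_minus; apply continuousC_mult;
    try apply continuousC_const; apply continuous_beta_weight; lra.
Qed.

Section Kernel.

Variable a : C.
Hypothesis Ha : -1 < Re a.

Lemma kernel_denom_neq0 k : Cplus (RtoC (INR (S k))) a <> RtoC 0.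
Proof.
intros E; apply (f_equal fst) in E; change (INR (S k) + fst a = 0) in E; rewrite S_INR in E.
generalize (pos_INR k); unfold Re in Ha; lra.
Qed.

Lemma kernel_S_1 k : kernel a (S k) 1 = RtoC 0.
Proof.
induction k as [|k IHk]; rewrite kernel_S_eq.
- change (kernel a 0 1) with (cpowR0 1 a); rewrite cpowR0_pos, cpowR_1_l by lra.
  replace ((1 - 1) ^ 0 / INR (fact 0)) with 1 by (simpl; field); Cring.
- rewrite IHk, Rminus_diag, pow_i by lia; replace (0 / INR (fact (S k))) with 0 by (unfold Rdiv; ring); Cring.
Qed.

Lemma kernel_S_0 k : kernel a (S k) 0 = Cmult (Cinv (Cplus (RtoC (INR (S k))) a)) (RtoC (/ INR (fact k))).
Proof.
rewrite kernel_S_eq, Rminus_0_r, pow1; unfold Rdiv; rewrite Rmult_1_l; Cring.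
Qed.

Lemma continuous_kernel_S k x : continuousC (kernel a (S k)) x.
Proof.
induction k as [|k IHk].
- apply continuous_ext with (fun u => Cmult (Cinv (Cplus (RtoC 1) a)) (Cminus (RtoC 1) (cpowR0 u (Cplus a (RtoC 1))))).
  + intros u; simpl kernel; rewrite cpowR0_succ; do 3 f_equal; simpl; field.
  + apply continuousC_mult, continuousC_minus, continuous_cpowR0; try apply continuousC_const.
    unfold Re in *; simpl; lra.
- apply continuousC_mult; [apply continuousC_const|apply continuousC_minus].
  + apply continuousC_RtoC, continuous_of_ex_derive; intros; auto_derive; auto.
  + apply continuousC_mult; [apply continuousC_RtoC, continuous_id|easy].
Qed.

Lemma is_derive_kernel_O u : 0 < u -> is_deriveC (kernel a 0) u (Cmult a (Cmult (RtoC (/ u)) (kernel a 0 u))).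
Proof.
intros Hu; simpl kernel; rewrite cpowR0_pos by easy.
apply is_derive_ext_loc with (fun s => cpowR s a); [|now apply is_derive_cpowR].
apply (filter_imp _ _ (fun y Hy => eq_sym (cpowR0_pos y a Hy)) (locally_pos u Hu)).
Qed.

Lemma is_derive_kernel_S_rec k u l : is_deriveC (kernel a k) u l ->
  is_deriveC (kernel a (S k)) u (Cmult (Cinv (Cplus (RtoC (INR (S k))) a))
    (Cminus (RtoC (- INR k * (1 - u) ^ pred k / INR (fact k))) (Cplus (kernel a k u) (Cmult (RtoC u) l)))).
Proof.
intros Hl; apply (is_derive_ext (fun v => Cmult (Cinv (Cplus (RtoC (INR (S k))) a))
  (Cminus (RtoC ((1 - v) ^ k / INR (fact k))) (Cmult (RtoC v) (kernel a k v))))).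
{ intros; symmetry; apply kernel_S_eq. }
apply is_deriveC_scal_l, is_deriveC_minus; [|now apply is_deriveC_id_mult].
apply is_deriveC_RtoC, is_derive_Taylor_weight.
Qed.

Lemma is_derive_kernel_S k u : 0 < u -> is_deriveC (kernel a (S k)) u (Copp (kernel a k u)).
Proof.
intros Hu; induction k as [|k IHk]; (eapply is_deriveC_ext_eq; [apply is_derive_kernel_S_rec|]).
- now apply is_derive_kernel_O.
- pose proof (kernel_denom_neq0 0) as Hc; change (INR 1) with 1 in *.
  replace (- INR 0 * (1 - u) ^ pred 0 / INR (fact 0)) with 0 by (simpl; field).
  rewrite RtoC_inv by lra; assert (RtoC u <> RtoC 0) by (apply RtoC_neq0; lra).
  Cfield; auto.
- exact IHk.
- pose proof (kernel_denom_neq0 k) as Hc1; pose proof (kernel_denom_neq0 (S k)) as Hc2.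
  replace (- INR (S k) * (1 - u) ^ pred (S k) / INR (fact (S k))) with (- ((1 - u) ^ k / INR (fact k))).
  2:{ rewrite fact_simpl, mult_INR; simpl pred; field; split; [apply INR_fact_neq_0|apply not_0_INR; lia]. }
  rewrite kernel_S_eq, RtoC_opp; rewrite S_INR in Hc2 |- *; rewrite RtoC_plus in *.
  Cfield; auto.
Qed.

Lemma continuous_kernel k x : 0 < x -> continuousC (kernel a k) x.
Proof.
intros Hx; destruct k.
- eapply is_deriveC_continuous, is_derive_kernel_O, Hx.
- eapply is_deriveC_continuous, is_derive_kernel_S, Hx.
Qed.

Lemma beta_exponent_neq0 n : beta_exponent a n <> RtoC 0.
Proof.
intros E; apply (kernel_denom_neq0 n).
replace (Cplus _ a) with (Copp (beta_exponent a n)) by (rewrite beta_exponent_eq; Cring); rewrite E; Cring.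
Qed.

Lemma kernel_1_beta_tail u : 0 < u <= 1 ->
  Cmult (cpowR u (Cplus (RtoC (INR 1)) a)) (beta_tail a 1 u) = Cmult (RtoC (INR (fact 0))) (kernel a 1 u).
Proof.
intros Hu; pose proof (beta_tail_rec a 0 u Hu) as Hrec.
change (INR 0) with 0 in Hrec; change (0 ^ 0) with 1 in Hrec; change ((1 - u) ^ 0) with 1 in Hrec.
assert (HJ : beta_tail a 1 u = Cmult (Cinv (beta_exponent a 0)) (Cminus (RtoC 1) (cpowR u (beta_exponent a 0))))
  by (apply Cmult_solve_l; [apply beta_exponent_neq0|];
      transitivity (Cminus (Cmult (beta_exponent a 0) (beta_tail a 1 u)) (Cmult (RtoC 0) (beta_tail a 0 u)));
      [Cring|rewrite Hrec; Cring]).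
rewrite HJ, kernel_S_eq; change (kernel a 0 u) with (cpowR0 u a).
rewrite cpowR0_succ, cpowR0_pos by lra.
replace (Cplus a (RtoC 1)) with (Cplus (RtoC (INR 1)) a) by (change (INR 1) with 1; Cring).
transitivity (Cmult (Cinv (beta_exponent a 0))
  (Cminus (cpowR u (Cplus (RtoC (INR 1)) a)) (Cmult (cpowR u (Cplus (RtoC (INR 1)) a)) (cpowR u (beta_exponent a 0))))); [Cring|].
rewrite cpowR_beta_exponent, beta_exponent_eq; pose proof (kernel_denom_neq0 0) as Hc.
change (INR (fact 0)) with 1; replace ((1 - u) ^ 0 / 1) with 1 by (simpl; field).
Cfield; exact Hc.
Qed.

Lemma kernel_SS_beta_tail k u : 0 < u <= 1 ->
  Cmult (cpowR u (Cplus (RtoC (INR (S k))) a)) (beta_tail a (S k) u) = Cmult (RtoC (INR (fact k))) (kernel a (S k) u) ->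
  Cmult (cpowR u (Cplus (RtoC (INR (S (S k)))) a)) (beta_tail a (S (S k)) u) =
  Cmult (RtoC (INR (fact (S k)))) (kernel a (S (S k)) u).
Proof.
intros Hu IHk; pose proof (beta_tail_rec a (S k) u Hu) as Hrec; rewrite pow_i in Hrec by lia.
assert (Hinv := cpowR_beta_exponent a u (S k)).
set (Q := cpowR u (beta_exponent a (S k))) in *; set (r := (1 - u) ^ S k) in *.
assert (HJ : beta_tail a (S (S k)) u =
    Cmult (Cinv (beta_exponent a (S k))) (Cminus (Cmult (RtoC (INR (S k))) (beta_tail a (S k) u)) (Cmult Q (RtoC r))))
  by (apply Cmult_solve_l; [apply beta_exponent_neq0|];
      transitivity (Cplus (Cminus (Cmult (beta_exponent a (S k)) (beta_tail a (S (S k)) u))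
                                  (Cmult (RtoC (INR (S k))) (beta_tail a (S k) u)))
                          (Cmult (RtoC (INR (S k))) (beta_tail a (S k) u)));
      [Cring|rewrite Hrec; Cring]).
assert (Hshift : cpowR u (Cplus (RtoC (INR (S (S k)))) a) = Cmult (RtoC u) (cpowR u (Cplus (RtoC (INR (S k))) a))).
{ rewrite <- (cpowR_1 u) by lra; rewrite cpowR_plus, (S_INR (S k)), RtoC_plus; f_equal; Cring. }
set (P1 := cpowR u (Cplus (RtoC (INR (S k))) a)) in *; set (P2 := cpowR u (Cplus (RtoC (INR (S (S k)))) a)) in *.
rewrite HJ; transitivity (Cmult (Cinv (beta_exponent a (S k)))
  (Cminus (Cmult (RtoC (INR (S k))) (Cmult P2 (beta_tail a (S k) u))) (Cmult (Cmult P2 Q) (RtoC r)))); [Cring|].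
rewrite Hshift at 1; replace (Cmult (Cmult (RtoC u) P1) (beta_tail a (S k) u)) with
  (Cmult (RtoC u) (Cmult P1 (beta_tail a (S k) u))) by Cring.
rewrite IHk, Hinv, beta_exponent_eq, (kernel_S_eq a (S k)), fact_simpl, mult_INR.
unfold Rdiv; rewrite !RtoC_mult, RtoC_inv, RtoC_mult by (apply Rmult_integral_contrapositive_currified;
  [apply not_0_INR; lia|apply INR_fact_neq_0]).
pose proof (kernel_denom_neq0 (S k)); pose proof (RtoC_neq0 _ (INR_fact_neq_0 k)).
pose proof (RtoC_neq0 (INR (S k)) (not_0_INR _ (Nat.neq_succ_0 k))).
unfold r; Cfield; auto.
Qed.

Lemma kernel_S_beta_tail k u : 0 < u <= 1 ->
  Cmult (cpowR u (Cplus (RtoC (INR (S k))) a)) (beta_tail a (S k) u) =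
  Cmult (RtoC (INR (fact k))) (kernel a (S k) u).
Proof.
intros Hu; induction k as [|k IHk]; [now apply kernel_1_beta_tail|now apply kernel_SS_beta_tail].
Qed.

End Kernel.

(** * Taylor expansion with kernel remainder *)

Section TaylorKernel.

Variable D : nat -> R -> C.
Hypothesis HD : forall j x, is_deriveC (D j) x (D (S j) x).
Variables (a : C) (h : R).
Hypothesis Ha : -1 < Re a.

Lemma is_derive_D_scaled j u : is_deriveC (fun v => D j (h * v)) u (Cmult (RtoC h) (D (S j) (h * u))).
Proof.
rewrite <- scal_C; apply (is_derive_comp (D j) (fun v => h * v)); [apply HD|].
auto_derive; [easy|ring].
Qed.

Lemma continuous_D_scaled j u : continuousC (fun v => D j (h * v)) u.
Proof. eapply is_deriveC_continuous, is_derive_D_scaled. Qed.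

Definition taylor_integrand k u := Cmult (D k (h * u)) (kernel a k u).

Lemma continuous_taylor_integrand k x : 0 < x -> continuousC (taylor_integrand k) x.
Proof. intros Hx; apply continuousC_mult; [apply continuous_D_scaled|now apply continuous_kernel]. Qed.

Lemma continuous_taylor_integrand_S k x : continuousC (taylor_integrand (S k)) x.
Proof. apply continuousC_mult; [apply continuous_D_scaled|now apply continuous_kernel_S]. Qed.

Lemma ex_RInt_taylor_integrand k e : 0 < e <= 1 -> @ex_RInt C_R_NormedModule (taylor_integrand k) e 1.
Proof. intros He; apply ex_RIntC_continuous; [lra|intros; apply continuous_taylor_integrand; lra]. Qed.

Lemma RInt_taylor_integrand_by_parts k e : 0 < e <= 1 ->
  RIntC (taylor_integrand k) e 1 =
  Cplus (Cmult (D k (h * e)) (kernel a (S k) e)) (Cmult (RtoC h) (RIntC (taylor_integrand (S k)) e 1)).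
Proof.
intros He.
assert (Hparts : Cminus (Cmult (RtoC h) (RIntC (taylor_integrand (S k)) e 1)) (Cmult (RtoC 1) (RIntC (taylor_integrand k) e 1))
    = Cminus (Cmult (D k (h * 1)) (kernel a (S k) 1)) (Cmult (D k (h * e)) (kernel a (S k) e))).
{ rewrite <- RIntC_lincomb by now apply ex_RInt_taylor_integrand.
  apply (RIntC_derive (fun u => Cmult (D k (h * u)) (kernel a (S k) u))); [lra| |].
  - intros x Hx; eapply is_deriveC_ext_eq.
    + apply is_deriveC_mult; [apply is_derive_D_scaled|apply is_derive_kernel_S; lra].
    + unfold taylor_integrand; Cring.
  - intros x Hx; apply continuousC_minus; apply continuousC_mult;
      try apply continuousC_const; apply continuous_taylor_integrand; lra. }
rewrite kernel_S_1 in Hparts.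
set (I0 := RIntC (taylor_integrand k) e 1 : C) in *; set (I1 := RIntC (taylor_integrand (S k)) e 1 : C) in *.
transitivity (Cminus (Cmult (RtoC h) I1) (Cminus (Cmult (RtoC h) I1) (Cmult (RtoC 1) I0))); [Cring|].
rewrite Hparts; Cring.
Qed.

Lemma RInt_taylor_expansion k e : 0 < e <= 1 ->
  RIntC (taylor_integrand 0) e 1 =
  Cplus (sum_n (fun j => Cmult (RtoC (h ^ j)) (Cmult (D j (h * e)) (kernel a (S j) e))) k)
        (Cmult (RtoC (h ^ S k)) (RIntC (taylor_integrand (S k)) e 1)).
Proof.
intros He; induction k as [|k IHk].
- rewrite sum_O, RInt_taylor_integrand_by_parts, pow_O, pow_1 by easy; Cring.
- rewrite sum_Sn_C, IHk, (RInt_taylor_integrand_by_parts (S k)) by easy.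
  change (h ^ S (S k)) with (h * h ^ S k); rewrite RtoC_mult; Cring.
Qed.

Lemma continuous_RInt_taylor_integrand_S k x : continuousC (fun e => RIntC (taylor_integrand (S k)) e 1) x.
Proof.
eapply is_deriveC_continuous.
apply (is_derive_RInt' (V := C_R_NormedModule) (taylor_integrand (S k)) (fun e => RIntC (taylor_integrand (S k)) e 1) x 1).
- apply filter_forall; intros y; apply (RInt_correct (V := C_R_CompleteNormedModule)).
  apply (ex_RInt_continuous (V := C_R_CompleteNormedModule)); intros; apply continuous_taylor_integrand_S.
- apply continuous_taylor_integrand_S.
Qed.

Lemma RInt_gen_taylor_expansion k (f : R -> C) :
  (forall u, 0 < u < 1 -> f u = taylor_integrand 0 u) ->
  RInt_genC f (at_right 0) (at_point 1) =
  Cplus (sum_n (fun j => Cmult (RtoC (h ^ j)) (Cmult (D j 0) (kernel a (S j) 0))) k)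
        (Cmult (RtoC (h ^ S k)) (RIntC (taylor_integrand (S k)) 0 1)).
Proof.
intros Hf; rewrite (RInt_gen_at_right_continuous f (fun e =>
  Cplus (sum_n (fun j => Cmult (RtoC (h ^ j)) (Cmult (D j (h * e)) (kernel a (S j) e))) k)
        (Cmult (RtoC (h ^ S k)) (RIntC (taylor_integrand (S k)) e 1)))); [now rewrite Rmult_0_r| |].
- intros e He; rewrite <- RInt_taylor_expansion by lra.
  apply (is_RInt_ext (V := C_R_NormedModule) (taylor_integrand 0)).
  + intros x Hx; rewrite Rmin_left, Rmax_right in Hx by lra; symmetry; apply Hf; lra.
  + apply (RInt_correct (V := C_R_CompleteNormedModule)), ex_RInt_taylor_integrand; lra.
- apply continuousC_plus.
  + apply (continuousC_sum_n (fun j e => Cmult (RtoC (h ^ j)) (Cmult (D j (h * e)) (kernel a (S j) e)))).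
    intros j; apply continuousC_mult; [apply continuousC_const|].
    apply continuousC_mult; [apply continuous_D_scaled|now apply continuous_kernel_S].
  + apply continuousC_mult; [apply continuousC_const|apply continuous_RInt_taylor_integrand_S].
Qed.

Lemma RInt_gen_taylor_remainder k (f : R -> C) :
  (forall u, 0 < u < 1 -> f u = Cmult (Cmult (D (S k) (h * u)) (cpowR u (Cplus (RtoC (INR (S k))) a)))
                                     (beta_tail a (S k) u)) ->
  RInt_genC f (at_right 0) (at_point 1) = Cmult (RtoC (INR (fact k))) (RIntC (taylor_integrand (S k)) 0 1).
Proof.
intros Hf; apply (RInt_gen_at_right_continuous f (fun e => Cmult (RtoC (INR (fact k))) (RIntC (taylor_integrand (S k)) e 1))).
- intros e He; apply (is_RInt_ext (V := C_R_NormedModule) (fun u => Cmult (RtoC (INR (fact k))) (taylor_integrand (S k) u))).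
  + intros x Hx; rewrite Rmin_left, Rmax_right in Hx by lra.
    rewrite Hf, <- Cmult_assoc, kernel_S_beta_tail by (easy || lra); unfold taylor_integrand; Cring.
  + apply is_RIntC_scal_l, (RInt_correct (V := C_R_CompleteNormedModule)), ex_RInt_taylor_integrand; lra.
- apply continuousC_mult; [apply continuousC_const|apply continuous_RInt_taylor_integrand_S].
Qed.

Theorem RInt_gen_kernel_taylor k (f g : R -> C) :
  (forall u, 0 < u < 1 -> f u = Cmult (D 0 (u * h)) (cpowR u a)) ->
  (forall u, 0 < u < 1 -> g u = Cmult (Cmult (D (S k) (h * u)) (cpowR u (Cplus (RtoC (INR (S k))) a)))
                                     (beta_tail a (S k) u)) ->
  RInt_genC f (at_right 0) (at_point 1) =
  Cplus (sum_n (fun j => Cmult (Cdiv (RtoC (h ^ j)) (Cmult (RtoC (INR (fact j))) (Cplus (RtoC (INR (S j))) a)))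
                               (D j 0)) k)
        (Cmult (RtoC (h ^ S k / INR (fact k))) (RInt_genC g (at_right 0) (at_point 1))).
Proof.
intros Hf Hg.
rewrite (RInt_gen_taylor_expansion k f), (RInt_gen_taylor_remainder k g Hg).
2:{ intros u Hu; rewrite Hf by easy; unfold taylor_integrand; simpl kernel.
    rewrite cpowR0_pos, Rmult_comm by lra; reflexivity. }
f_equal.
- apply sum_n_ext; intros j; rewrite kernel_S_0, RtoC_inv by apply INR_fact_neq_0.
  pose proof (kernel_denom_neq0 a Ha j); pose proof (RtoC_neq0 _ (INR_fact_neq_0 j)).
  unfold Cdiv; Cfield; auto.
- pose proof (RtoC_neq0 _ (INR_fact_neq_0 k)).
  unfold Rdiv; rewrite RtoC_mult, RtoC_inv by apply INR_fact_neq_0; Cfield; auto.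
Qed.

End TaylorKernel.

Lemma incBeta_reflect k b u : 0 < u < 1 ->
  incBeta (1 - u) (RtoC (INR (S k))) b =
  RIntC (fun t => Cmult (cpowR t (Cminus b (RtoC 1))) (RtoC ((1 - t) ^ k))) u 1.
Proof.
intros Hu; set (g := fun t => Cmult (RtoC (t ^ k)) (cpowR (1 - t) (Cminus b (RtoC 1)))).
unfold incBeta; rewrite (RInt_ext (V := C_R_CompleteNormedModule) _ g).
2:{ intros t Ht; rewrite Rmin_left, Rmax_right in Ht by lra; unfold g.
    replace (Cminus (RtoC (INR (S k))) (RtoC 1)) with (RtoC (INR k)) by (rewrite S_INR; apply C_ext; simpl; ring).
    rewrite cpowR_pow by lra; reflexivity. }
symmetry; apply (is_RInt_unique (V := C_R_CompleteNormedModule)).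
replace u with (1 - (1 - u)) at 1 by ring.
apply (is_RInt_ext (V := C_R_NormedModule) (fun t => g (1 - t))).
{ intros t _; unfold g; replace (1 - (1 - t)) with t by ring; Cring. }
apply is_RIntC_reflect, (RInt_correct (V := C_R_CompleteNormedModule)), ex_RIntC_continuous; [lra|].
intros t Ht; apply continuousC_mult.
- apply continuousC_RtoC, continuous_of_ex_derive; intros; auto_derive; auto.
- apply (continuous_comp (fun t => 1 - t) (fun s => cpowR s (Cminus b (RtoC 1)))).
  + apply continuous_of_ex_derive; intros; auto_derive; auto.
  + apply continuous_cpowR; lra.
Qed.

Lemma is_derive_trk Fr Fi (Hr : forall j x, ex_derive_n Fr j x) (Hi : forall j x, ex_derive_n Fi j x) j x :
  is_deriveC (trk Fr Fi j) x (trk Fr Fi (S j) x).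
Proof. apply is_deriveC_pair; apply Derive_correct; [apply (Hr (S j))|apply (Hi (S j))]. Qed.

Theorem mainTheorem9 (m : C) (dH : nat) (Fr Fi : R -> R)
  (HdH : (0 < dH)%nat) (Hm : Re m < - INR dH)
  (Hr : forall (j : nat) (x : R), ex_derive_n Fr j x)
  (Hi : forall (j : nat) (x : R), ex_derive_n Fi j x)
  (n : nat) (Hn : (1 <= n)%nat) :
  (forall h : R, 0 <= h ->
     trP m dH Fr Fi h =
     (sum_n (fun j : nat =>
        Cmult (RtoC (h ^ j) / (RtoC (INR (fact j)) * (RtoC (INR j) - m - RtoC (INR dH))))%C
              (trk Fr Fi j 0)) (n - 1)
      + Cmult (RtoC (h ^ n / INR (fact (n - 1))))
          (@RInt_gen C_R_CompleteNormedModule (fun u =>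
             Cmult (Cmult (trk Fr Fi n (h * u))
                          (cpowR u (RtoC (INR n) - m - RtoC (INR dH) - 1)%C))
                   (@RInt C_R_CompleteNormedModule (fun t => Cmult (cpowR t (m + RtoC (INR dH) - RtoC (INR n))%C)
                                         (RtoC ((1 - t) ^ (n - 1)))) u 1))
             (at_right 0) (at_point 1)))%C)
  /\
  trP m dH Fr Fi 1 =
  (sum_n (fun j : nat =>
     Cmult (1 / (RtoC (INR (fact j)) * (RtoC (INR j) - m - RtoC (INR dH))))%C
           (trk Fr Fi j 0)) (n - 1)
   + Cmult (RtoC (1 / INR (fact (n - 1))))
       (@RInt_gen C_R_CompleteNormedModule (fun u =>
          Cmult (Cmult (trk Fr Fi n u)
                       (cpowR u (RtoC (INR n) - m - RtoC (INR dH) - 1)%C))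
                (incBeta (1 - u) (RtoC (INR n)) (m + RtoC (INR dH) - RtoC (INR n) + 1)%C))
          (at_right 0) (at_point 1)))%C.
Proof.
(* Only [Re m + d_H < 0] enters, through [Re a > -1]. *)
destruct n as [|k]; [lia|]; replace (S k - 1)%nat with k by lia; unfold trP.
set (a := (Copp m - RtoC (INR dH) - 1)%C).
assert (Ha : -1 < Re a) by (unfold a, Re in *; simpl; lra).
assert (Hdenom : forall j, (RtoC (INR j) - m - RtoC (INR dH))%C = Cplus (RtoC (INR (S j))) a)
  by (intros j; unfold a; rewrite S_INR, RtoC_plus; Cring).
assert (Hexp : (RtoC (INR (S k)) - m - RtoC (INR dH) - 1)%C = Cplus (RtoC (INR (S k))) a) by (unfold a; Cring).
assert (Htail : forall u c, c = (m + RtoC (INR dH) - RtoC (INR (S k)))%C ->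
  RIntC (fun t => Cmult (cpowR t c) (RtoC ((1 - t) ^ k))) u 1 = beta_tail a (S k) u).
{ intros u c ->; apply (RInt_ext (V := C_R_CompleteNormedModule)); intros t _; unfold beta_weight.
  replace (S k - 1)%nat with k by lia; do 2 f_equal; unfold beta_exponent, a; rewrite S_INR, RtoC_plus; Cring. }
pose proof (RInt_gen_kernel_taylor (trk Fr Fi) (is_derive_trk Fr Fi Hr Hi) a) as Htaylor.
split.
- intros h _; erewrite (Htaylor h Ha k); [| easy |].
  + f_equal; apply sum_n_ext; intros j; now rewrite Hdenom.
  + intros u _; cbv beta; now rewrite Htail, Hexp.
- erewrite (Htaylor 1 Ha k); [| easy |].
  + f_equal; [apply sum_n_ext; intros j; rewrite Hdenom, pow1; unfold Cdiv; Cring|now rewrite pow1].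
  + intros u Hu; cbv beta; rewrite Hexp, Rmult_1_l, incBeta_reflect, Htail by (easy || Cring); reflexivity.
Qed.
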